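(* Let $\mathbf A$ be a finite totally ordered algebra. Then $\mathrm{nuP}_{\mathbf A}\subseteq\mathrm{MULTIMONOTONE}$.
   Context: A finite algebra has a finite universe and finitely many basic operations; it is totally ordered if some total order on its universe is preserved by all its basic operations. An $n$-ary circuit over $\mathbf A$ is a DAG with one output node, sources labelled by variables $x_1,\dots,x_n$ or constants from $A$, gates labelled by basic operations of $\mathbf A$; its size is nodes plus edges. A NuDFA over $\mathbf A$ is $(\{t_n\}_{n\ge1},\iota,S)$ with $t_n$ an $n$-ary circuit, $\iota:\{0,1\}\to A$, $S\subseteq A$; it accepts $b\in\{0,1\}^n$ iff $t_n(\iota(b_1),\dots,\iota(b_n))\in S$; polynomial size means size of $t_n$ polynomial in $n$. $\mathrm{nuP}_{\mathbf A}$ is the class of languages over $\{0,1\}$ accepted by polynomial-size NuDFAs over $\mathbf A$. $\mathrm{MULTIMONOTONE}$ is the class of languages $L$ for which there is a constant $c$ such that for each $n$, $L\cap\{0,1\}^n=\{x:g(M_1(x),\dots,M_c(x))=1\}$ for some function $g:\{0,1\}^c\to\{0,1\}$ and circuits $M_1,\dots,M_c$ using only fan-in-2 $\wedge,\vee$ gates (on input variables and constants) of total size polynomial in $n$. *)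

From mathcomp Require Import all_boot.
Set Implicit Arguments. Unset Strict Implicit. Unset Printing Implicit Defensive.

Section Algebra.
Variables (A O : finType) (ar : O -> nat).
Variable op : forall o : O, (ar o).-tuple A -> A.
Arguments op : clear implicits.

Definition total_order_rel (r : rel A) : Prop :=
  [/\ reflexive r, antisymmetric r, transitive r & total r].

Definition preserves (r : rel A) : Prop :=
  forall (o : O) (a b : (ar o).-tuple A),
    (forall i, r (tnth a i) (tnth b i)) -> r (op o a) (op o b).

Definition totally_ordered : Prop :=
  exists r : rel A, total_order_rel r /\ preserves r.

(** * Circuits over A, as straight-line programs (a topologically sorted DAG).
   Node number p may only refer to nodes q < p; the output node is the last
   node. *)
Inductive anode :=
| AVar of nat
| AConst of A
| AGate (o : O) of (ar o).-tuple nat.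

Definition acircuit := seq anode.

Definition anode_wf (n p : nat) (nd : anode) : bool :=
  match nd with
  | AVar i => i < n
  | AConst _ => true
  | AGate _ args => all (fun q => q < p) args
  end.

Definition acircuit_wf (n : nat) (c : acircuit) : bool :=
  (0 < size c) && all (fun pn => anode_wf n pn.1 pn.2) (zip (iota 0 (size c)) c).

Definition anode_edges (nd : anode) : nat :=
  match nd with AGate o _ => ar o | _ => 0 end.

Definition acircuit_size (c : acircuit) : nat :=
  size c + \sum_(nd <- c) anode_edges nd.

(** Evaluation; [d] is a dummy default value that is never used on
   well-formed circuits. *)
Definition anode_val (d : A) (x : seq A) (vs : seq A) (nd : anode) : A :=
  match nd with
  | AVar i => nth d x i
  | AConst a => a
  | AGate o args => op o (map_tuple (fun q => nth d vs q) args)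
  end.

Definition acircuit_eval (d : A) (c : acircuit) (x : seq A) : A :=
  last d (foldl (fun vs nd => rcons vs (anode_val d x vs nd)) [::] c).

Definition nuP (L : seq bool -> Prop) : Prop :=
  exists (t : nat -> acircuit) (iota0 : bool -> A) (S : {set A}) (C k : nat),
    (forall n, 1 <= n -> acircuit_wf n (t n) /\ acircuit_size (t n) <= C * n ^ k + C) /\
    (forall b : seq bool, 1 <= size b ->
       (L b <-> acircuit_eval (iota0 false) (t (size b)) (map iota0 b) \in S)).

End Algebra.

Inductive mnode :=
| MVar of nat
| MConst of bool
| MAnd of nat & nat
| MOr of nat & nat.

Definition mcircuit := seq mnode.

Definition mnode_wf (n p : nat) (nd : mnode) : bool :=
  match nd with
  | MVar i => i < n
  | MConst _ => true
  | MAnd q1 q2 | MOr q1 q2 => (q1 < p) && (q2 < p)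
  end.

Definition mcircuit_wf (n : nat) (c : mcircuit) : bool :=
  (0 < size c) && all (fun pn => mnode_wf n pn.1 pn.2) (zip (iota 0 (size c)) c).

Definition mnode_edges (nd : mnode) : nat :=
  match nd with MAnd _ _ | MOr _ _ => 2 | _ => 0 end.

Definition mcircuit_size (c : mcircuit) : nat :=
  size c + \sum_(nd <- c) mnode_edges nd.

Definition mnode_val (x : seq bool) (vs : seq bool) (nd : mnode) : bool :=
  match nd with
  | MVar i => nth false x i
  | MConst b => b
  | MAnd q1 q2 => nth false vs q1 && nth false vs q2
  | MOr q1 q2 => nth false vs q1 || nth false vs q2
  end.

Definition mcircuit_eval (c : mcircuit) (x : seq bool) : bool :=
  last false (foldl (fun vs nd => rcons vs (mnode_val x vs nd)) [::] c).

Definition MULTIMONOTONE (L : seq bool -> Prop) : Prop :=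
  exists c C k : nat, forall n : nat,
    exists (g : c.-tuple bool -> bool) (M : c.-tuple mcircuit),
      (forall i, mcircuit_wf n (tnth M i)) /\
      \sum_(i < c) mcircuit_size (tnth M i) <= C * n ^ k + C /\
      (forall b : seq bool, size b = n ->
         (L b <-> g [tuple mcircuit_eval (tnth M i) b | i < c])).

(* Orient the preserved total order [r] so that [r (iota0 false) (iota0 true)].
   For every node of the algebra circuit and every [a : A], the bit
   [r a (value of the node)] is then a monotone function of the input bits:
   for an input node it is a constant or the input bit itself, and for a gate
   [op o] it is an OR over the tuples [u] with [r a (op o u)] of the AND of the
   threshold bits [r (u j) (value of argument j)]. This gives [#|A|] monotone
   circuits of size linear in the size of the algebra circuit, and the output
   value is the largest [a] whose threshold bit is set, so membership in [S]
   is a fixed Boolean function of these [#|A|] bits. *)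

From mathcomp Require Import all_boot zify.
From Stdlib Require Import Classical_Prop.
Set Implicit Arguments. Unset Strict Implicit. Unset Printing Implicit Defensive.

Definition mrun (x vs : seq bool) (c : mcircuit) : seq bool :=
  foldl (fun vs nd => rcons vs (mnode_val x vs nd)) vs c.

Definition mcircuit_wf_from (n b : nat) (c : mcircuit) : bool :=
  all (fun pn => mnode_wf n pn.1 pn.2) (zip (iota b (size c)) c).

Lemma mrun_cat x vs c1 c2 : mrun x vs (c1 ++ c2) = mrun x (mrun x vs c1) c2.
Proof. exact: foldl_cat. Qed.

Lemma size_mrun x vs c : size (mrun x vs c) = size vs + size c.
Proof.
elim: c vs => [|nd c IHc] vs /=; first by rewrite addn0.
by rewrite IHc size_rcons addSnnS.
Qed.

Lemma nth_mrun x vs c i : i < size vs -> nth false (mrun x vs c) i = nth false vs i.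
Proof.
elim: c vs => [|nd c IHc] vs //= lt_i.
by rewrite IHc ?size_rcons 1?ltnW // nth_rcons lt_i.
Qed.

Lemma mcircuit_wf_from_cat n b c1 c2 :
  mcircuit_wf_from n b (c1 ++ c2) =
  mcircuit_wf_from n b c1 && mcircuit_wf_from n (b + size c1) c2.
Proof. by rewrite /mcircuit_wf_from size_cat iotaD zip_cat ?size_iota // all_cat. Qed.

Lemma mcircuit_size_le c : mcircuit_size c <= 3 * size c.
Proof.
rewrite /mcircuit_size; elim: c => [|nd c IHc]; first by rewrite big_nil.
rewrite big_cons /=; have : mnode_edges nd <= 2 by case: nd.
by move: IHc; lia.
Qed.

Inductive mform :=
| FWire of nat
| FVar of nat
| FConst of bool
| FAnd of mform & mform
| FOr of mform & mform.

Fixpoint fsize (f : mform) : nat :=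
  match f with FAnd f g | FOr f g => fsize f + fsize g + 1 | _ => 1 end.

Fixpoint feval (x vs : seq bool) (f : mform) : bool :=
  match f with
  | FWire q => nth false vs q
  | FVar i => nth false x i
  | FConst v => v
  | FAnd f g => feval x vs f && feval x vs g
  | FOr f g => feval x vs f || feval x vs g
  end.

Fixpoint fwires_below (b : nat) (f : mform) : bool :=
  match f with
  | FWire q => q < b
  | FVar _ | FConst _ => true
  | FAnd f g | FOr f g => fwires_below b f && fwires_below b g
  end.

Fixpoint fvars_below (n : nat) (f : mform) : bool :=
  match f with
  | FVar i => i < n
  | FWire _ | FConst _ => true
  | FAnd f g | FOr f g => fvars_below n f && fvars_below n g
  end.

Fixpoint compile (b : nat) (f : mform) : mcircuit :=
  match f with
  | FWire q => [:: MAnd q q]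
  | FVar i => [:: MVar i]
  | FConst v => [:: MConst v]
  | FAnd f g => compile b f ++ compile (b + fsize f) g ++
                [:: MAnd (b + fsize f).-1 (b + fsize f + fsize g).-1]
  | FOr f g => compile b f ++ compile (b + fsize f) g ++
               [:: MOr (b + fsize f).-1 (b + fsize f + fsize g).-1]
  end.

Lemma fsize_gt0 f : 0 < fsize f.
Proof. by case: f => //= *; rewrite addn1. Qed.

Lemma size_compile b f : size (compile b f) = fsize f.
Proof. by elim: f b => //= f IHf g IHg b; rewrite !size_cat IHf IHg addnA. Qed.

Lemma fwires_below_leq b b' f : b <= b' -> fwires_below b f -> fwires_below b' f.
Proof.
move=> le_bb'; elim: f => //= [q lt_qb | f IHf g IHg | f IHf g IHg].
- exact: leq_trans lt_qb le_bb'.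
- by case/andP=> /IHf-> /IHg->.
- by case/andP=> /IHf-> /IHg->.
Qed.

Lemma feval_wires_ext x vs vs' b f : fwires_below b f ->
  (forall i, i < b -> nth false vs' i = nth false vs i) ->
  feval x vs' f = feval x vs f.
Proof.
move=> + eq_vs; elim: f => /= [q /eq_vs|i|v|f IHf g IHg|f IHf g IHg] //.
- by case/andP=> /IHf-> /IHg->.
- by case/andP=> /IHf-> /IHg->.
Qed.

Lemma compile_correct x vs f : fwires_below (size vs) f ->
  nth false (mrun x vs (compile (size vs) f)) (size vs + fsize f).-1 = feval x vs f.
Proof.
elim: f vs => [q|i|v|f IHf g IHg|f IHf g IHg] vs /=;
  try by rewrite addn1 /= nth_rcons ltnn eqxx ?andbb.
all: case/andP=> wf wg; rewrite !mrun_cat /=.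
all: set vs1 := mrun x vs (compile _ f); set vs2 := mrun x vs1 _.
all: have sz1 : size vs1 = size vs + fsize f by rewrite size_mrun size_compile.
all: have sz2 : size vs2 = size vs + fsize f + fsize g by rewrite size_mrun size_compile sz1.
all: have wg1 : fwires_below (size vs1) g by apply: fwires_below_leq wg; rewrite sz1 leq_addr.
all: have := IHg vs1 wg1; rewrite sz1 => out_g.
all: have := fsize_gt0 f; have := fsize_gt0 g => pos_g pos_f.
all: have -> : (size vs + (fsize f + fsize g + 1)).-1 = size vs + fsize f + fsize g by lia.
all: rewrite nth_rcons sz2 ltnn eqxx out_g nth_mrun ?sz1; last by lia.
all: rewrite IHf // (feval_wires_ext (vs := vs) _ wg) // => i lt_i.
all: by rewrite nth_mrun.
Qed.

Lemma compile_wf n b f : fwires_below b f -> fvars_below n f ->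
  mcircuit_wf_from n b (compile b f).
Proof.
elim: f b => [q|i|v|f IHf g IHg|f IHf g IHg] b /=.
- by rewrite /mcircuit_wf_from /= => ->.
- by rewrite /mcircuit_wf_from /= => _ ->.
- by [].
all: case/andP=> wf wg /andP[vf vg].
all: rewrite !mcircuit_wf_from_cat IHf //= size_compile IHg //=;
  last by apply: fwires_below_leq wg; apply: leq_addr.
all: rewrite /mcircuit_wf_from /= !size_compile andbT.
all: by have := fsize_gt0 f; have := fsize_gt0 g; lia.
Qed.

Definition fAnd (fs : seq mform) : mform := foldr FAnd (FConst true) fs.
Definition fOr (fs : seq mform) : mform := foldr FOr (FConst false) fs.

Lemma feval_fAnd x vs fs : feval x vs (fAnd fs) = all (feval x vs) fs.
Proof. by elim: fs => //= f fs ->. Qed.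

Lemma feval_fOr x vs fs : feval x vs (fOr fs) = has (feval x vs) fs.
Proof. by elim: fs => //= f fs ->. Qed.

Lemma fwires_below_fAnd b fs : fwires_below b (fAnd fs) = all (fwires_below b) fs.
Proof. by elim: fs => //= f fs ->. Qed.

Lemma fwires_below_fOr b fs : fwires_below b (fOr fs) = all (fwires_below b) fs.
Proof. by elim: fs => //= f fs ->. Qed.

Lemma fvars_below_fAnd n fs : fvars_below n (fAnd fs) = all (fvars_below n) fs.
Proof. by elim: fs => //= f fs ->. Qed.

Lemma fvars_below_fOr n fs : fvars_below n (fOr fs) = all (fvars_below n) fs.
Proof. by elim: fs => //= f fs ->. Qed.

Lemma fsize_fAnd m fs : all (fun f => fsize f <= m) fs ->
  fsize (fAnd fs) <= size fs * (m + 1) + 1.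
Proof. by elim: fs => //= f fs IHfs /andP[le_f /IHfs]; lia. Qed.

Lemma fsize_fOr m fs : all (fun f => fsize f <= m) fs ->
  fsize (fOr fs) <= size fs * (m + 1) + 1.
Proof. by elim: fs => //= f fs IHfs /andP[le_f /IHfs]; lia. Qed.

Fixpoint compile_seq (T : eqType) (b : nat) (mk : T -> mform) (s : seq T) :
    mcircuit * (T -> nat) :=
  match s with
  | [::] => ([::], fun _ => 0)
  | a :: s' =>
    let b' := b + fsize (mk a) in
    let rest := compile_seq b' mk s' in
    (compile b (mk a) ++ rest.1, fun a' => if a' == a then b'.-1 else rest.2 a')
  end.

Section CompileSeq.
Variables (T : eqType) (mk : T -> mform).

Lemma size_compile_seq b s : size (compile_seq b mk s).1 = \sum_(a <- s) fsize (mk a).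
Proof.
elim: s b => [|a s IHs] b /=; first by rewrite big_nil.
by rewrite size_cat IHs size_compile big_cons.
Qed.

Lemma compile_seq_wf n b s : (forall a, fwires_below b (mk a)) ->
  (forall a, fvars_below n (mk a)) -> mcircuit_wf_from n b (compile_seq b mk s).1.
Proof.
elim: s b => [|a s IHs] b //= wires vars.
rewrite mcircuit_wf_from_cat compile_wf //= size_compile IHs // => a'.
exact: fwires_below_leq (leq_addr _ _) (wires a').
Qed.

Lemma compile_seq_correct x vs s : (forall a, fwires_below (size vs) (mk a)) ->
  let cs := compile_seq (size vs) mk s in
  forall a, a \in s ->
    cs.2 a < size (mrun x vs cs.1) /\ nth false (mrun x vs cs.1) (cs.2 a) = feval x vs (mk a).
Proof.
elim: s vs => [|a s IHs] vs // wires /= a'.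
rewrite mrun_cat; set vs1 := mrun x vs (compile _ _).
have sz1 : size vs1 = size vs + fsize (mk a) by rewrite size_mrun size_compile.
have wires1 a'' : fwires_below (size vs1) (mk a'').
  by apply: fwires_below_leq (wires a''); rewrite sz1 leq_addr.
have pos_a := fsize_gt0 (mk a).
rewrite in_cons -sz1; case: eqP => [-> _ | _ /= in_s].
  rewrite size_mrun nth_mrun sz1; last by lia.
  by split; [lia | rewrite compile_correct].
have [lt_a' ->] := IHs vs1 wires1 a' in_s; split => //.
by apply: feval_wires_ext (wires a') _ => i lt_i; rewrite nth_mrun.
Qed.

End CompileSeq.

Section Simulation.
Variables (A O : finType) (ar : O -> nat) (op : forall o, (ar o).-tuple A -> A).
Variables (r : rel A) (iota0 : bool -> A).

Definition arun (x avs : seq A) (c : acircuit A ar) : seq A :=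
  foldl (fun vs nd => rcons vs (anode_val op (iota0 false) x vs nd)) avs c.

Definition acircuit_wf_from (n p : nat) (c : acircuit A ar) : bool :=
  all (fun pn => anode_wf n pn.1 pn.2) (zip (iota p (size c)) c).

Lemma size_arun x avs c : size (arun x avs c) = size avs + size c.
Proof.
elim: c avs => [|nd c IHc] avs /=; first by rewrite addn0.
by rewrite IHc size_rcons addSnnS.
Qed.

(* A monotone formula for [r a (value of nd)], given that node [pos q a']
   computes [r a' (value of node q)] for the earlier nodes [q]. For a gate,
   [r a (op o y)] holds iff [r a (op o u)] for some tuple [u] lying below [y]
   componentwise: take [u := y] one way, use that [op o] preserves [r] the other. *)
Definition threshold (nd : anode A ar) (pos : nat -> A -> nat) (a : A) : mform :=
  match nd with
  | AVar i => if r a (iota0 false) then FConst true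
              else if r a (iota0 true) then FVar i else FConst false
  | AConst c => FConst (r a c)
  | AGate o args =>
    fOr [seq fAnd [seq FWire (pos (tnth args j) (tnth u j)) | j <- enum 'I_(ar o)]
        | u <- enum {: (ar o).-tuple A} & r a (@op o u)]
  end.

Definition thresholds_hold (p : nat) (vs : seq bool) (pos : nat -> A -> nat)
    (avs : seq A) : Prop :=
  forall q a, q < p ->
    pos q a < size vs /\ nth false vs (pos q a) = r a (nth (iota0 false) avs q).

(* Node [p] of the algebra circuit becomes the block of threshold formulas
   [threshold nd pos a], [a : A], and [pos p] records where they are computed. *)
Fixpoint simulate (p b : nat) (pos : nat -> A -> nat) (c : acircuit A ar) :
    mcircuit * (nat -> A -> nat) :=
  match c with
  | [::] => ([::], pos)
  | nd :: c' =>
    let blk := compile_seq b (threshold nd pos) (enum A) in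
    let pos' q := if q == p then blk.2 else pos q in
    let rest := simulate p.+1 (b + size blk.1) pos' c' in
    (blk.1 ++ rest.1, rest.2)
  end.

(* [mcircuit_eval] reads the last node, so the output wire for [a] is copied there. *)
Definition threshold_circuit (c : acircuit A ar) (a : A) : mcircuit :=
  let sim := simulate 0 0 (fun _ _ => 0) c in
  let w := sim.2 (size c).-1 a in
  sim.1 ++ [:: MAnd w w].

Definition threshold_bound : nat := \sum_(o : O) #|A| ^ ar o * (2 * ar o + 2) + 1.

Lemma fsize_threshold nd pos a : fsize (threshold nd pos a) <= threshold_bound.
Proof.
rewrite /threshold_bound; case: nd => [i|c|o args] /=.
- by do 2?case: ifP => _; rewrite addn1.
- by rewrite addn1.
apply: leq_trans (fsize_fOr (m := 2 * ar o + 1) _) _.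
  rewrite all_map; apply/allP => u _ /=.
  apply: leq_trans (fsize_fAnd (m := 1) _) _; first by rewrite all_map; apply/allP.
  by rewrite size_map size_enum_ord; lia.
rewrite leq_add2r (bigD1 o) //= size_map.
apply: leq_trans (leq_addr _ _); apply: leq_mul; last by lia.
by rewrite size_filter -card_tuple cardE count_size.
Qed.

Lemma size_simulate p b pos c :
  size (simulate p b pos c).1 <= #|A| * threshold_bound * size c.
Proof.
elim: c p b pos => [|nd c IHc] p b pos //=.
rewrite size_cat size_compile_seq mulnS leq_add // cardE.
by rewrite -sum1_size big_distrl leq_sum // => a _; rewrite /= mul1n fsize_threshold.
Qed.

Lemma threshold_circuit_size c a :
  mcircuit_size (threshold_circuit c a) <= 3 * (#|A| * threshold_bound * size c + 1).
Proof.
apply: leq_trans (mcircuit_size_le _) _.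
by rewrite leq_mul2l size_cat leq_add2r size_simulate.
Qed.

Lemma threshold_wf n p vs pos avs nd a :
  thresholds_hold p vs pos avs -> anode_wf n p nd ->
  fwires_below (size vs) (threshold nd pos a) && fvars_below n (threshold nd pos a).
Proof.
move=> hold; case: nd => [i|c|o args] //=; first by do 2?case: ifP.
move=> /allP args_wf; rewrite fwires_below_fOr fvars_below_fOr !all_map.
apply/andP; split; apply/allP => u _ /=;
  rewrite ?fwires_below_fAnd ?fvars_below_fAnd all_map; apply/allP => j _ //=.
by have [] := hold (tnth args j) (tnth u j) (args_wf _ (mem_tnth _ _)).
Qed.

Hypotheses (r_refl : reflexive r) (r_trans : transitive r) (r_op : preserves op r).
Hypothesis r_iota0 : r (iota0 false) (iota0 true).

Lemma threshold_correct n p vs pos avs nd a x :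
  thresholds_hold p vs pos avs -> anode_wf n p nd -> size x = n ->
  feval x vs (threshold nd pos a) = r a (anode_val op (iota0 false) (map iota0 x) avs nd).
Proof.
move=> hold + size_x; case: nd => [i lt_in | c _ | o args /allP args_wf] //=.
  rewrite (nth_map false) ?size_x //.
  case: ifP => r_a0.
    by case: (nth false x i) => //=; rewrite (r_trans r_a0 r_iota0).
  by case: ifP => r_a1 /=; case: (nth false x i); rewrite ?r_a0 ?r_a1.
set y := map_tuple _ args; rewrite feval_fOr has_map.
have wire_y (u : (ar o).-tuple A) j :
    nth false vs (pos (tnth args j) (tnth u j)) = r (tnth u j) (tnth y j).
  by rewrite tnth_map; have [] := hold (tnth args j) (tnth u j) (args_wf _ (mem_tnth _ _)).
apply/hasP/idP => [[u] | r_ay].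
  rewrite mem_filter /= feval_fAnd all_map => /andP[r_au _] /allP u_le_y.
  apply: r_trans r_au _; apply: r_op => j; rewrite -wire_y; exact: u_le_y (mem_enum _ _).
exists y; first by rewrite mem_filter r_ay mem_enum.
by rewrite /= feval_fAnd all_map; apply/allP => j _ /=; rewrite wire_y.
Qed.

Lemma thresholds_hold_step n x p vs pos avs nd : size x = n -> size avs = p ->
  thresholds_hold p vs pos avs -> anode_wf n p nd ->
  let blk := compile_seq (size vs) (threshold nd pos) (enum A) in
  thresholds_hold p.+1 (mrun x vs blk.1) (fun q => if q == p then blk.2 else pos q)
    (rcons avs (anode_val op (iota0 false) (map iota0 x) avs nd)).
Proof.
move=> size_x size_avs hold nd_wf blk q a; rewrite ltnS leq_eqVlt.
case/orP=> [/eqP-> | lt_qp].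
  have wires a' : fwires_below (size vs) (threshold nd pos a').
    by case/andP: (threshold_wf a' hold nd_wf).
  rewrite eqxx; have [lt_blk ->] := compile_seq_correct x wires (mem_enum A a).
  by rewrite nth_rcons size_avs ltnn eqxx (threshold_correct _ hold nd_wf).
have [lt_pos val_pos] := hold q a lt_qp.
rewrite (ltn_eqF lt_qp) size_mrun nth_mrun // val_pos nth_rcons size_avs lt_qp.
by rewrite ltn_addr.
Qed.

Lemma simulate_correct n x c : size x = n -> forall p vs pos avs,
  size avs = p -> thresholds_hold p vs pos avs -> acircuit_wf_from n p c ->
  let sim := simulate p (size vs) pos c in
  thresholds_hold (p + size c) (mrun x vs sim.1) sim.2 (arun (map iota0 x) avs c) /\
  mcircuit_wf_from n (size vs) sim.1.
Proof.
move=> size_x; elim: c => [|nd c IHc] p vs pos avs size_avs hold /=.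
  by rewrite addn0.
rewrite /acircuit_wf_from /= => /andP[nd_wf c_wf].
have hold1 := thresholds_hold_step size_x size_avs hold nd_wf.
set blk := compile_seq _ _ _ in hold1 *.
have [] := IHc _ _ _ _ _ hold1 c_wf; first by rewrite size_rcons size_avs.
rewrite size_mrun -addSnnS => hold2 wf2; split; first by rewrite mrun_cat.
rewrite mcircuit_wf_from_cat wf2 andbT compile_seq_wf // => a.
- by case/andP: (threshold_wf a hold nd_wf).
- by case/andP: (threshold_wf a hold nd_wf).
Qed.

Lemma simulate_circuit n x c : acircuit_wf n c -> size x = n ->
  let sim := simulate 0 0 (fun _ _ => 0) c in
  thresholds_hold (size c) (mrun x [::] sim.1) sim.2 (arun (map iota0 x) [::] c) /\
  mcircuit_wf_from n 0 sim.1.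
Proof.
by case/andP=> _ c_wf size_x; apply: simulate_correct size_x 0 [::] _ [::] _ _ c_wf.
Qed.

Lemma threshold_circuit_wf n c a : acircuit_wf n c -> mcircuit_wf n (threshold_circuit c a).
Proof.
move=> c_wf; have out_lt : (size c).-1 < size c by case/andP: c_wf; rewrite ltn_predL.
have [hold sim_wf] := simulate_circuit c_wf (size_nseq n false).
have [lt_w _] := hold (size c).-1 a out_lt.
rewrite size_mrun /= in lt_w.
rewrite /mcircuit_wf -/(mcircuit_wf_from n 0 _) mcircuit_wf_from_cat sim_wf.
by rewrite size_cat addn1 /mcircuit_wf_from /= andbb andbT.
Qed.

Lemma threshold_circuit_eval n c a x : acircuit_wf n c -> size x = n ->
  mcircuit_eval (threshold_circuit c a) x =
  r a (acircuit_eval op (iota0 false) c (map iota0 x)).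
Proof.
move=> c_wf size_x; have out_lt : (size c).-1 < size c by case/andP: c_wf; rewrite ltn_predL.
have [hold _] := simulate_circuit c_wf size_x.
have [_ val_w] := hold (size c).-1 a out_lt.
rewrite /mcircuit_eval -/(mrun x [::] _) mrun_cat /= last_rcons andbb val_w.
by rewrite /acircuit_eval -/(arun _ [::] c) -nth_last size_arun.
Qed.

End Simulation.

Lemma oriented_total_order (A O : finType) (ar : O -> nat)
    (op : forall o, (ar o).-tuple A -> A) (u v : A) :
  totally_ordered op ->
  exists r : rel A, [/\ reflexive r, antisymmetric r, transitive r, preserves op r & r u v].
Proof.
case=> r [[r_refl r_anti r_trans r_total] r_op].
have [r_uv | r_vu] := boolP (r u v); first by exists r.
exists (fun a b => r b a); split => //.
- by move=> a b r_ab; apply: r_anti; rewrite andbC.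
- by move=> b a c r_ba r_cb; apply: r_trans r_cb r_ba.
- by move=> o a b r_ba; apply: r_op.
- by have := r_total u v; rewrite (negbTE r_vu).
Qed.

(* [v] is the largest [a] with [r a v]; the bits [t] are the values [r a v]. *)
Lemma max_threshold_in_set (A : finType) (r : rel A) (S : {set A}) (v : A)
    (t : #|A|.-tuple bool) :
  reflexive r -> antisymmetric r -> (forall j, tnth t j = r (enum_val j) v) ->
  [exists i, [&& enum_val i \in S, tnth t i &
     [forall j, tnth t j ==> r (enum_val j) (enum_val i)]]] = (v \in S).
Proof.
move=> r_refl r_anti t_v.
apply/existsP/idP => [[i /and3P[in_S t_i /forallP max_i]] | v_in_S].
  have := max_i (enum_rank v); rewrite t_v enum_rankK r_refl /= => r_vi.
  by have <- : enum_val i = v by apply: r_anti; rewrite -t_v t_i r_vi.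
exists (enum_rank v); rewrite t_v enum_rankK v_in_S r_refl /=.
by apply/forallP => j; rewrite t_v; apply/implyP.
Qed.

Lemma multimonotone_of_thresholds (A : finType) (r : rel A) (S : {set A})
    (L : seq bool -> Prop) (val : seq bool -> A) (M : nat -> A -> mcircuit) (D k : nat) :
  reflexive r -> antisymmetric r ->
  (forall n a, 1 <= n -> mcircuit_wf n (M n a) /\ mcircuit_size (M n a) <= D * n ^ k + D) ->
  (forall b a, 1 <= size b -> mcircuit_eval (M (size b) a) b = r a (val b)) ->
  (forall b, 1 <= size b -> L b <-> val b \in S) ->
  MULTIMONOTONE L.
Proof.
move=> r_refl r_anti M_wf M_eval L_val.
exists #|A|, (#|A| * D + #|A|), k => -[|n].
  have [b L_b] : exists b : bool, L [::] <-> b.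
    by case: (classic (L [::])) => L_nil; [exists true | exists false].
  exists (fun _ => b), [tuple [:: MConst false] | _ < #|A|]; split; last split.
  - by move=> i; rewrite tnth_mktuple.
  - under eq_bigr do rewrite tnth_mktuple.
    by rewrite sum_nat_const card_ord /mcircuit_size big_seq1 /=; lia.
  - by move=> b' /size0nil->.
set X := #|A|; exists (fun t : X.-tuple bool => [exists i : 'I_X, [&& enum_val i \in S,
    tnth t i & [forall j : 'I_X, tnth t j ==> r (enum_val j) (enum_val i)]]]).
exists [tuple M n.+1 (enum_val i) | i < X]; split; last split.
- by move=> i; rewrite tnth_mktuple; case: (M_wf n.+1 (enum_val i)).
- apply: (@leq_trans (\sum_(i < X) (D * n.+1 ^ k + D))).
    by apply: leq_sum => i _; rewrite tnth_mktuple; case: (M_wf n.+1 (enum_val i)).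
  by rewrite sum_nat_const card_ord; lia.
move=> b size_b; rewrite L_val ?size_b //.
have tnth_b j : tnth [tuple mcircuit_eval (tnth [tuple M n.+1 (enum_val i) | i < X] i) b
    | i < X] j = r (enum_val j) (val b) by rewrite !tnth_mktuple -size_b M_eval ?size_b.
by rewrite (max_threshold_in_set _ r_refl r_anti tnth_b).
Qed.

Unset Implicit Arguments.

Theorem mainTheorem3 (A O : finType) (ar : O -> nat)
    (op : forall o, (ar o).-tuple A -> A) :
  totally_ordered op ->
  forall L : seq bool -> Prop, nuP op L -> MULTIMONOTONE L.
Proof.
move=> ordered L [t [iota0 [S [C [k [t_poly L_t]]]]]].
have [r [r_refl r_anti r_trans r_op r_iota0]] :=
  oriented_total_order (iota0 false) (iota0 true) ordered.
set D := 3 * (#|A| * threshold_bound A ar * C + 1).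
apply: (multimonotone_of_thresholds (M := fun n => threshold_circuit op r iota0 (t n))
  (D := D) (k := k) r_refl r_anti _ _ L_t).
- move=> n a n_gt0; have [t_wf t_size] := t_poly n n_gt0.
  split; first exact: (threshold_circuit_wf r_refl r_trans r_op r_iota0 a t_wf).
  have size_le : size (t n) <= C * n ^ k + C by apply: leq_trans t_size; apply: leq_addr.
  apply: leq_trans (threshold_circuit_size op r iota0 (t n) a) _.
  rewrite /D; move: size_le; set P := #|A| * _; set N := n ^ k; set s := size _.
  by move=> size_le; have := leq_mul (leqnn P) size_le; nia.
- move=> b a b_gt0.
  exact: (threshold_circuit_eval r_refl r_trans r_op r_iota0 a (proj1 (t_poly _ b_gt0)) erefl).
Qed.
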